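(* With notation as in the context: (a) If $v,w\in\mathscr{O}_3$ are $J$ cosets, then $dd(v,w)$ equals the number of positions (out of six) at which the strings $\gamma_1(v)$ and $\gamma_1(w)$ disagree. (b) If $v,w$ are $L$ cosets of different colors but with the same label, then $dd(v,w)=2$. (c) If $v,w$ are distinct $L$ cosets of the same color, then $dd(v,w)=2$, unless $\{\gamma_1(v),\gamma_1(w)\}=\{i,\overline i\}$ for some $1\le i\le 6$, in which case $dd(v,w)=4$. (d) If $v,w$ are $L$ cosets of different colors and different labels, then $dd(v,w)=4$, unless $v=-w$, in which case $dd(v,w)=6$. (e) Let $v=v(i,j)$ with $i\in\{0,1\}$ and $2\le j\le 7$ (an unbarred $L$ coset of either color, with label $j-1$), and let $w$ be a $J$ coset. Then $dd(v,w)=2$ if $\gamma_1(w)$ has a plus sign in position $j-1$, and $dd(v,w)=4$ otherwise. (f) Let $v=-v(i,j)$ with $i\in\{0,1\}$ and $2\le j\le7$ (a barred $L$ coset of either color, with label $\overline{j-1}$), and let $w$ be a $J$ coset. Then $dd(v,w)=2$ if $\gamma_1(w)$ has a minus sign in position $j-1$, and $dd(v,w)=4$ otherwise.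
   Context: There are 56 symbols $\pm v(i,j)$, $0\le i<j\le 7$ (they index the right cosets of a subgroup $G\cong W(E_6)$ in a group $H\cong W(E_7)$; only the symbols are needed here). To each associate the integer vector $\pm v(i,j)=\pm\big(4(\vec e_{i+1}+\vec e_{j+1})-\sum_{k=1}^8\vec e_k\big)\in\mathbb{Z}^8$, and define the discrete distance $dd(v,w)=\frac1{16}\sum_{k=1}^8(v_k-w_k)^2$. Blue $L$ cosets: $\mathscr{O}_1=\{v(0,j),-v(1,j):2\le j\le7\}$; red $L$ cosets: $\mathscr{O}_2=\{v(1,j),-v(0,j):2\le j\le7\}$; $J$ cosets: $\mathscr{O}_3=\{\pm v(0,1)\}\cup\{\pm v(i,j):2\le i<j\le7\}$. Labels: $\gamma_1(v(0,j))=\gamma_1(v(1,j))=j-1$ and $\gamma_1(-v(1,j))=\gamma_1(-v(0,j))=\overline{j-1}$ for $2\le j\le7$; $\gamma_1(v(0,1))={+}{+}{+}{+}{+}{+}$, $\gamma_1(-v(0,1))={-}{-}{-}{-}{-}{-}$; for $2\le i<j\le7$, $\gamma_1(v(i,j))$ is the length-6 sign string with plus signs in positions $i-1$ and $j-1$ and minus signs elsewhere, and $\gamma_1(-v(i,j))$ is its negation (all signs reversed). *)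

From mathcomp Require Import all_boot all_order all_algebra.
Set Implicit Arguments. Unset Strict Implicit. Unset Printing Implicit Defensive.
Import Order.TTheory GRing.Theory Num.Theory.

(* A symbol  (-1)^neg * v(i,j); coordinates of Z^8 are indexed by 'I_8,
   index k standing for e_{k+1}.  Only symbols with i < j are meaningful. *)
Inductive sym := Sym (neg : bool) (i j : 'I_8).

Definition sneg (s : sym) : bool := let: Sym n _ _ := s in n.
Definition si (s : sym) : nat := let: Sym _ i _ := s in i.
Definition sj (s : sym) : nat := let: Sym _ _ j := s in j.

Definition valid (s : sym) : bool := si s < sj s.

Definition symopp (s : sym) : sym := let: Sym n i j := s in Sym (~~ n) i j.

Local Open Scope ring_scope.

Definition vec (s : sym) (k : 'I_8) : int :=
  let: Sym n i j := s in
  (if n then -1 else 1) * (4 * ((k == i)%:R + (k == j)%:R) - 1).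

Definition dd (v w : sym) : rat :=
  (\sum_(k < 8) ((vec v k - vec w k) ^+ 2)%:~R) / 16%:R.

Local Close Scope ring_scope.

Definition blue (s : sym) : bool :=
  valid s && (2 <= sj s) && ((~~ sneg s && (si s == 0)) || (sneg s && (si s == 1))).
Definition red (s : sym) : bool :=
  valid s && (2 <= sj s) && ((~~ sneg s && (si s == 1)) || (sneg s && (si s == 0))).
Definition Lcoset (s : sym) : bool := blue s || red s.
Definition Jcoset (s : sym) : bool :=
  valid s && (((si s == 0) && (sj s == 1)) || (2 <= si s)).

(* labels: an L label  i  (bar = false) or  \bar i  (bar = true), 1 <= i <= 6;
   or a length-6 sign string, index p : 'I_6 standing for position p+1,
   true meaning '+'. *)
Inductive label :=
  | LLab (i : nat) (bar : bool)
  | JLab (s : {ffun 'I_6 -> bool}).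

(* sign of a sign string at (1-based) position k, 1 <= k <= 6 *)
Definition at_pos (s : {ffun 'I_6 -> bool}) (k : nat) : bool := s (inord k.-1).

Definition gamma1 (s : sym) : label :=
  let: Sym n i j := s in
  if (i == 0 :> nat) && (j == 1 :> nat) then JLab [ffun _ => ~~ n]
  else if 2 <= i then
    JLab [ffun p : 'I_6 => ((p.+1 == i.-1) || (p.+1 == j.-1)) (+) n]
  else LLab j.-1 n.

From mathcomp Require Import all_boot all_order all_algebra.
From mathcomp Require Import zify ring.
Set Implicit Arguments. Unset Strict Implicit. Unset Printing Implicit Defensive.
Import GRing.Theory.
Local Open Scope ring_scope.

(* Every vector +-v(i,j) has squared norm 24 and coordinate sum 0, so
   dd(v,w) = 3 - <v,w>/8, and <v,w> = +-(16m - 8) where m counts the common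
   indices of v and w; this settles the L-coset cases (b)-(d).
   In the 1-based coordinates of the paper, a J coset w has w_1 = w_2, and
   (w_{q+2} + w_1)/2 is the sign of gamma1(w) at position q.  Hence in (e), (f)
   <v(i,j), w> = 4(w_1 + w_{j+1}) = +-8.  In (a) the difference d = v - w
   satisfies d_1 = d_2 and sum d = 0, which makes sum_q (d_{q+2} + d_1)^2,
   i.e. 16 times the Hamming distance of the labels, equal to
   sum_k d_k^2 = 16 dd(v,w). *)

Lemma sum_indicator_mulr (R : pzSemiRingType) (T : finType) (x : T) (F : T -> R) :
  \sum_k (k == x)%:R * F k = F x.
Proof.
under eq_bigr do rewrite mulr_natl mulrb.
by rewrite -big_mkcond big_pred1_eq.
Qed.

Lemma sum_sqrB (R : comPzRingType) (T : finType) (x y : T -> R) :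
  \sum_k (x k - y k) ^+ 2 =
  \sum_k x k * x k + \sum_k y k * y k - 2 * \sum_k x k * y k.
Proof.
under eq_bigr do rewrite sqrrB -mulr_natl !expr2.
by rewrite big_split sumrB /= -mulr_sumr addrAC.
Qed.

Lemma sum_sqr_signB (T : finType) (s t : T -> bool) :
  \sum_p ((-1) ^+ s p - (-1) ^+ t p) ^+ 2 = 4 * #|[pred p | s p != t p]|%:R :> int.
Proof.
rewrite -sum1_card natr_sum mulr_sumr [RHS]big_mkcond /=.
by apply: eq_bigr => p _; rewrite inE /=; case: (s p) (t p) => [] [].
Qed.

Lemma sum_sqr_shift_tail (R : comPzRingType) (d : 'I_8 -> R) :
  (forall i : 'I_8, (i <= 1)%N -> d i = d ord0) -> \sum_k d k = 0 ->
  \sum_(p < 6) (d (rshift 2 p) + d ord0) ^+ 2 = \sum_k d k ^+ 2.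
Proof.
move=> dlow dsum0.
have head (F : R -> R) : \sum_(i < 2) F (d (lshift 6 i)) = F (d ord0) *+ 2.
  by rewrite big_ord_recr big_ord1 !dlow.
move: dsum0; rewrite !(@big_split_ord _ _ _ 2 6) /= (head id) (head (fun x => x ^+ 2)).
move=> /(canRL (addKr _)); rewrite addr0 => tail.
under eq_bigr do rewrite sqrrD.
by rewrite !big_split /= -mulr_suml tail sumr_const card_ord; ring.
Qed.

Definition dot (v w : sym) : int := \sum_k vec v k * vec w k.

Lemma vecE n (i j k : 'I_8) :
  vec (Sym n i j) k = (-1) ^+ n * (4 * ((k == i) + (k == j))%:R - 1).
Proof. by rewrite /= natrD; case: n. Qed.

Lemma sum_vec_mul n (i j : 'I_8) (x : 'I_8 -> int) :
  \sum_k vec (Sym n i j) k * x k = (-1) ^+ n * (4 * (x i + x j) - \sum_k x k).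
Proof.
under eq_bigr do rewrite vecE natrD -mulrA.
rewrite -mulr_sumr; congr (_ * _).
under eq_bigr do rewrite mulrBl mul1r !mulrDr mulrDl -!mulrA.
by rewrite sumrB big_split /= -!mulr_sumr !sum_indicator_mulr mulrDr.
Qed.

Lemma sum_vec s : \sum_k vec s k = 0.
Proof.
case: s => n i j; under eq_bigr do rewrite -[vec _ _]mulr1.
by rewrite sum_vec_mul sumr_const card_ord subrr mulr0.
Qed.

Lemma dot_self s : valid s -> dot s s = 24.
Proof.
case: s => n i j; rewrite /valid /= => ltij; have ij : i != j by rewrite neq_ltn ltij.
rewrite /dot sum_vec_mul sum_vec subr0 !vecE !eqxx (negPf ij) eq_sym (negPf ij).
by case: n.
Qed.

Lemma dd_sqr_nat v w (k : nat) :
  \sum_i (vec v i - vec w i) ^+ 2 = 16 * k%:Z -> dd v w = k%:R.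
Proof. by rewrite /dd -rmorph_sum => ->; rewrite rmorphM /= mulrC mulKf. Qed.

Lemma dd_dot_nat v w (k : nat) : valid v -> valid w ->
  dot v w = 24 - 8 * k%:Z -> dd v w = k%:R.
Proof.
move=> vv vw dvw; apply: dd_sqr_nat.
by rewrite sum_sqrB -!/(dot _ _) !dot_self // dvw; lia.
Qed.

Lemma LcosetE n (i j : 'I_8) : Lcoset (Sym n i j) = (i <= 1)%N && (2 <= j)%N.
Proof. by rewrite /Lcoset /blue /red /valid /=; case: n; lia. Qed.

Lemma Lcoset_bounds v : Lcoset v -> (si v <= 1)%N /\ (2 <= sj v)%N.
Proof. by case: v => n i j; rewrite LcosetE => /andP. Qed.

Lemma Lcoset_valid v : Lcoset v -> valid v.
Proof. by move/Lcoset_bounds; rewrite /valid; lia. Qed.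

Lemma blueE n (i j : 'I_8) :
  blue (Sym n i j) = Lcoset (Sym n i j) && (n == (i == 1 :> nat)).
Proof. by rewrite LcosetE /blue /valid /=; case: n; lia. Qed.

Lemma redE n (i j : 'I_8) :
  red (Sym n i j) = Lcoset (Sym n i j) && (n != (i == 1 :> nat)).
Proof. by rewrite LcosetE /red /valid /=; case: n; lia. Qed.

Lemma same_colorE v w :
  (blue v && blue w) || (red v && red w) =
  [&& Lcoset v, Lcoset w & (sneg v == sneg w) == (si v == si w)].
Proof.
case: v w => n i j [n' i' j']; rewrite !blueE !redE !LcosetE /=.
by case: n n' => [] []; lia.
Qed.

Lemma diff_colorE v w :
  (blue v && red w) || (red v && blue w) =
  [&& Lcoset v, Lcoset w & (sneg v == sneg w) != (si v == si w)].
Proof.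
case: v w => n i j [n' i' j']; rewrite !blueE !redE !LcosetE /=.
by case: n n' => [] []; lia.
Qed.

Lemma gamma1_Lcoset v : Lcoset v -> gamma1 v = LLab (sj v).-1 (sneg v).
Proof.
case: v => n i j; rewrite LcosetE /= => /andP[i1 j2].
by rewrite ifF ?ifF //; lia.
Qed.

Lemma sym_ext v w : sneg v = sneg w -> si v = si w -> sj v = sj w -> v = w.
Proof. by case: v w => n i j [n' i' j'] /= -> /val_inj-> /val_inj->. Qed.

Lemma dd_Lcoset v w : Lcoset v -> Lcoset w ->
  let m := ((si v == si w) + (sj v == sj w))%N in
  dd v w = (if sneg v == sneg w then (2 - m).*2 else m.+1.*2)%:R.
Proof.
move=> Lv Lw; apply: dd_dot_nat (Lcoset_valid Lv) (Lcoset_valid Lw) _.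
move: Lv Lw; case: v w => n i j [n' i' j'].
rewrite !LcosetE /= => /andP[i1 j2] /andP[i1' j2'].
rewrite /dot sum_vec_mul sum_vec subr0 !vecE.
have -> : (i == j') = false by apply/negbTE; rewrite -val_eqE /=; lia.
have -> : (j == i') = false by apply/negbTE; rewrite -val_eqE /=; lia.
by rewrite !val_eqE; case: n n' (i == i') (j == j') => [] [] [] [].
Qed.

Lemma opposite_labelsE v w : Lcoset v -> Lcoset w ->
  (exists i : nat, (1 <= i <= 6)%N /\
     ((gamma1 v = LLab i false /\ gamma1 w = LLab i true) \/
      (gamma1 v = LLab i true /\ gamma1 w = LLab i false))) <->
  sj v = sj w /\ sneg v != sneg w.
Proof.
move=> Lv Lw; have [[_ jv] [_ jw]] := (Lcoset_bounds Lv, Lcoset_bounds Lw).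
rewrite !gamma1_Lcoset //; split.
- by case=> k [_ [[[ev ->] [ew ->]] | [[ev ->] [ew ->]]]]; split=> //; lia.
- case=> <- nvw; exists (sj v).-1; split.
    by move: jv; case: (v) => n i j /= jv; have := ltn_ord j; lia.
  by case: (sneg v) (sneg w) nvw => [] [] //= _; [right | left].
Qed.

Lemma dd_diff_color_same_label v w :
  (blue v && red w) || (red v && blue w) -> gamma1 v = gamma1 w ->
  dd v w = 2%:R.
Proof.
rewrite diff_colorE => /and3P[Lv Lw col].
have [[_ jv] [_ jw]] := (Lcoset_bounds Lv, Lcoset_bounds Lw).
rewrite !gamma1_Lcoset // => -[ej en].
have {ej} ej : sj v = sj w by lia.
by move: col; rewrite dd_Lcoset // en ej !eqxx; case: (si v == si w).
Qed.

Lemma dd_same_color v w :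
  (blue v && blue w) || (red v && red w) -> v <> w ->
  ((exists i : nat, (1 <= i <= 6)%N /\
     ((gamma1 v = LLab i false /\ gamma1 w = LLab i true) \/
      (gamma1 v = LLab i true /\ gamma1 w = LLab i false))) ->
    dd v w = 4%:R) /\
  (~ (exists i : nat, (1 <= i <= 6)%N /\
     ((gamma1 v = LLab i false /\ gamma1 w = LLab i true) \/
      (gamma1 v = LLab i true /\ gamma1 w = LLab i false))) ->
    dd v w = 2%:R).
Proof.
rewrite same_colorE => /and3P[Lv Lw col] nvw.
rewrite opposite_labelsE // dd_Lcoset //; split=> [[-> /negPf nn] | nopp].
  by move: col; rewrite nn eqxx; case: (si v == si w).
move: col; case: (sneg v =P sneg w) => [en | /eqP nn];
  case: (si v =P si w) => [ei | _] //= _.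
  by case: (sj v =P sj w) => // ej; case: nvw; apply: sym_ext.
by case: (sj v =P sj w) => // ej; case: nopp.
Qed.

Lemma dd_diff_color_diff_label v w :
  (blue v && red w) || (red v && blue w) -> gamma1 v <> gamma1 w ->
  (v = symopp w -> dd v w = 6%:R) /\ (v <> symopp w -> dd v w = 4%:R).
Proof.
rewrite diff_colorE => /and3P[Lv Lw col] nlab.
rewrite dd_Lcoset //; split=> [evw | nopp].
  by rewrite evw; case: (w) => n i j /=; rewrite !eqxx; case: n.
move: col; case: (sneg v =P sneg w) => [en | /eqP nn];
  case: (si v =P si w) => [ei | _] //= _.
  case: (sj v =P sj w) => // ej; case: nlab.
  by rewrite !gamma1_Lcoset // en ej.
case: (sj v =P sj w) => // ej; case: nopp.
case: (w) nn ei ej => n i j /= nn ei ej.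
by apply: sym_ext => //=; case: (sneg v) n nn => [] [].
Qed.

Lemma Jcoset_vec_low w (i : 'I_8) : Jcoset w -> (i <= 1)%N -> vec w i = vec w ord0.
Proof.
case: w => n a b; rewrite !vecE /Jcoset /valid -!val_eqE /= => /andP[ab J] i1.
by congr (_ * (4 * _%:R - 1)); lia.
Qed.

Lemma Jlabel_vec w sw (p : 'I_6) : Jcoset w -> gamma1 w = JLab sw ->
  vec w (rshift 2 p) + vec w ord0 = - 2 * (-1) ^+ sw p.
Proof.
case: w => n a b; rewrite !vecE /Jcoset /valid -!val_eqE /= => /andP[ab J].
case: ifP => [/andP[/eqP a0 /eqP b1] [<-] | _]; rewrite ?ffunE.
  have -> : ((2 + p == a) + (2 + p == b))%N = 0%N by lia.
  have -> : ((0 == a) + (0 == b))%N = 1%N by lia.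
  by case: n.
case: ifP => // a2 [<-]; rewrite ffunE.
have -> : ((0 == a) + (0 == b))%N = 0%N by lia.
have -> : (p.+1 == a.-1) = (2 + p == a)%N by apply/eqP/eqP; lia.
have -> : (p.+1 == b.-1) = (2 + p == b)%N by apply/eqP/eqP; lia.
have : ~~ ((2 + p == a) && (2 + p == b))%N by lia.
by case: (2 + p == a)%N (2 + p == b)%N n => [] [] [].
Qed.

Lemma dd_Jcoset v w sv sw : Jcoset v -> Jcoset w ->
  gamma1 v = JLab sv -> gamma1 w = JLab sw ->
  dd v w = #|[pred p | sv p != sw p]|%:R.
Proof.
move=> Jv Jw lv lw; apply: dd_sqr_nat.
pose d k := vec v k - vec w k.
have dlow (i : 'I_8) : (i <= 1)%N -> d i = d ord0.
  by move=> i1; rewrite /d !Jcoset_vec_low.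
have dsum0 : \sum_k d k = 0 by rewrite sumrB !sum_vec subrr.
have tail p : d (rshift 2 p) + d ord0 = - 2 * ((-1) ^+ sv p - (-1) ^+ sw p).
  by rewrite mulrBr -(Jlabel_vec p Jv lv) -(Jlabel_vec p Jw lw) /d; ring.
rewrite -(sum_sqr_shift_tail dlow dsum0).
under eq_bigr do rewrite tail exprMn sqrrN.
by rewrite -mulr_sumr sum_sqr_signB mulrA (natz #|_|).
Qed.

Lemma dot_Lcoset_Jcoset n (i j : 'I_8) w sw :
  (i <= 1)%N -> (2 <= j)%N -> Jcoset w -> gamma1 w = JLab sw ->
  dot (Sym n i j) w = - 8 * (-1) ^+ (n (+) at_pos sw j.-1).
Proof.
move=> i1 j2 Jw lw; pose p : 'I_6 := inord j.-2.
have ej : rshift 2 p = j :> 'I_8.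
  by apply/val_inj; rewrite /= inordK; have := ltn_ord j; lia.
rewrite /dot sum_vec_mul sum_vec subr0 (Jcoset_vec_low Jw i1) -ej addrC.
by rewrite (Jlabel_vec p Jw lw) signr_addb /at_pos /= inord_val; ring.
Qed.

Lemma dd_Lcoset_Jcoset n (i j : 'I_8) w sw :
  (i <= 1)%N -> (2 <= j)%N -> Jcoset w -> gamma1 w = JLab sw ->
  dd (Sym n i j) w = if n (+) at_pos sw j.-1 then 2%:R else 4%:R.
Proof.
move=> i1 j2 Jw lw; have vv : valid (Sym n i j) by rewrite /valid /=; lia.
have /andP[vw _] := Jw.
by case: ifP => b; apply: dd_dot_nat; rewrite // (dot_Lcoset_Jcoset n i1 j2 Jw lw) b.
Qed.

Theorem proposition6p3 :
  (* (a) *)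
  (forall (v w : sym) (sv sw : {ffun 'I_6 -> bool}),
     Jcoset v -> Jcoset w -> gamma1 v = JLab sv -> gamma1 w = JLab sw ->
     dd v w = (#|[pred p | sv p != sw p]|)%:R) /\
  (* (b) *)
  (forall v w : sym,
     (blue v && red w) || (red v && blue w) -> gamma1 v = gamma1 w ->
     dd v w = 2%:R) /\
  (* (c) *)
  (forall v w : sym,
     (blue v && blue w) || (red v && red w) -> v <> w ->
     ((exists i : nat, (1 <= i <= 6)%N /\
        ((gamma1 v = LLab i false /\ gamma1 w = LLab i true) \/
         (gamma1 v = LLab i true /\ gamma1 w = LLab i false))) ->
       dd v w = 4%:R) /\
     (~ (exists i : nat, (1 <= i <= 6)%N /\
        ((gamma1 v = LLab i false /\ gamma1 w = LLab i true) \/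
         (gamma1 v = LLab i true /\ gamma1 w = LLab i false))) ->
       dd v w = 2%:R)) /\
  (* (d) *)
  (forall v w : sym,
     (blue v && red w) || (red v && blue w) -> gamma1 v <> gamma1 w ->
     (v = symopp w -> dd v w = 6%:R) /\ (v <> symopp w -> dd v w = 4%:R)) /\
  (* (e) *)
  (forall (i j : 'I_8) (w : sym) (sw : {ffun 'I_6 -> bool}),
     (i <= 1)%N -> (2 <= j)%N -> Jcoset w -> gamma1 w = JLab sw ->
     dd (Sym false i j) w = (if at_pos sw j.-1 then 2%:R else 4%:R)) /\
  (* (f) *)
  (forall (i j : 'I_8) (w : sym) (sw : {ffun 'I_6 -> bool}),
     (i <= 1)%N -> (2 <= j)%N -> Jcoset w -> gamma1 w = JLab sw ->
     dd (Sym true i j) w = (if ~~ at_pos sw j.-1 then 2%:R else 4%:R)).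
Proof.
split; first exact: dd_Jcoset.
split; first exact: dd_diff_color_same_label.
split; first exact: dd_same_color.
split; first exact: dd_diff_color_diff_label.
by split=> i j w sw i1 j2 Jw lw; rewrite (dd_Lcoset_Jcoset _ i1 j2 Jw lw).
Qed.
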